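(* For a planted $K$-path, the likelihood ratio is \[ L(G)=\frac{\mathbb{P}_1(G)}{\mathbb{P}_0(G)}=\frac{1}{n(n-1)\cdots(n-K+1)}\,\bigl|\{K\text{-paths in }G\}\bigr|\,\Bigl(\frac{\lambda}{n}\Bigr)^{-K+1}. \] Moreover $\mathbb{E}_0(L^2)=\mathbb{E}_0(x^S)$, where $x=n/\lambda$ and $S$ is the number of edges common to the $K$-path $(1-2-\cdots-K)$ and a $K$-path $\pi$ chosen uniformly at random among the $n(n-1)\cdots(n-K+1)$ possible $K$-paths on node set $[n]$.
   Context: Model: $n$ nodes, $\lambda>0$. $\mathbb{P}_0$: $G\sim\mathcal G(n,\lambda/n)$. $\mathbb{P}_1$: $G=G_0\cup G'$ with $G_0\sim\mathcal G(n,\lambda/n)$ and $G'$ the image of the path $1-2-\cdots-K$ under a uniformly random injection $[K]\to[n]$ independent of $G_0$. An ordered set $(i_1,\dots,i_K)$ of $K$ distinct nodes of $[n]$ is a $K$-path in $G$ if the edges $(i_\ell,i_{\ell+1})$, $\ell=1,\dots,K-1$, are all present in $G$; $K$-paths are counted as ordered sequences. $\mathbb{E}_0$ is expectation under $\mathbb{P}_0$. *)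

From mathcomp Require Import all_boot all_order all_algebra.
Set Implicit Arguments. Unset Strict Implicit. Unset Printing Implicit Defensive.
Import Order.TTheory GRing.Theory Num.Theory.
Local Open Scope ring_scope.

Definition pairs (n : nat) : {set {set 'I_n}} := [set e : {set 'I_n} | #|e| == 2%N].
Definition graphs (n : nat) : {set {set {set 'I_n}}} := powerset (pairs n).

Definition P0 {R : realFieldType} (n : nat) (p : R) (G : {set {set 'I_n}}) : R :=
  \prod_(e in pairs n) (if e \in G then p else 1 - p).

(* Ordered sequences of K distinct nodes = injections 'I_K -> 'I_n. *)
Definition injs (n K : nat) : {set {ffun 'I_K -> 'I_n}} := [set f : {ffun 'I_K -> 'I_n} | injectiveb f].

Definition pedges (n K : nat) (f : 'I_K -> 'I_n) : {set {set 'I_n}} :=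
  [set [set f ij.1; f ij.2] | ij in [set ij : 'I_K * 'I_K | (nat_of_ord ij.2 == (nat_of_ord ij.1).+1)%N]].

Definition nKpaths (n K : nat) (G : {set {set 'I_n}}) : nat :=
  #|[set f in injs n K | pedges f \subset G]|.

(* Planted model P1: G = G0 \cup image of path 1-...-K under a uniform random
   injection, G0 ~ G(n,p) independent. *)
Definition P1 {R : realFieldType} (n K : nat) (p : R) (G : {set {set 'I_n}}) : R :=
  (#|injs n K|%:R)^-1 *
  \sum_(f in injs n K) \sum_(G0 in graphs n)
     P0 p G0 * (G0 :|: pedges f == G)%:R.

Definition LR {R : realFieldType} (n K : nat) (p : R) (G : {set {set 'I_n}}) : R :=
  P1 K p G / P0 p G.

Definition E0 {R : realFieldType} (n : nat) (p : R) (X : {set {set 'I_n}} -> R) : R :=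
  \sum_(G in graphs n) P0 p G * X G.

(* Edges of the fixed path 1-2-...-K, placed on the first K nodes. *)
Definition path0 (n K : nat) : {set {set 'I_n}} :=
  [set [set ab.1; ab.2] | ab in [set ab : 'I_n * 'I_n | (nat_of_ord ab.2 == (nat_of_ord ab.1).+1)%N && (nat_of_ord ab.2 < K)%N]].

Definition Scommon (n K : nat) (f : 'I_K -> 'I_n) : nat := #|path0 n K :&: pedges f|.

Definition Eunif {R : realFieldType} (n K : nat) (Y : {ffun 'I_K -> 'I_n} -> R) : R :=
  (#|injs n K|%:R)^-1 * \sum_(f in injs n K) Y f.

From mathcomp Require Import all_boot all_order all_algebra.
From mathcomp Require Import ring zify.

(* Write E_f for the edge set of the path traced by an injection f.  As the
   weight P0 factorizes over edges, the graphs G0 with G0 :|: E_f = G have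
   total weight P0(G) p^-|E_f| if E_f is contained in G and 0 otherwise, and
   |E_f| = K - 1; averaging over f gives the formula for L.  For L^2, the
   probability that G contains both E_f and E_g is
   p^|E_f :|: E_g| = p^(2(K-1)) (1/p)^|E_f :&: E_g|, so E0(L^2) is the average
   of (1/p)^|E_f :&: E_g| over pairs (f, g).  Relabelling the vertices by a
   permutation that maps the standard path onto f shows that the inner
   average over g does not depend on f. *)
Set Implicit Arguments. Unset Strict Implicit. Unset Printing Implicit Defensive.
Import Order.TTheory GRing.Theory Num.Theory.
Local Open Scope ring_scope.

Lemma sum_powerset_prod (R : comPzSemiRingType) (T : finType) (A : {set T})
    (a b : T -> R) :
  \sum_(S in powerset A) \prod_(e in A) (if e \in S then a e else b e)
  = \prod_(e in A) (a e + b e).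
Proof.
have -> : \prod_(e in A) (a e + b e)
    = \prod_(e in A) \sum_(x : bool) (if x then a e else b e).
  by apply: eq_bigr => e _; rewrite big_bool.
rewrite (big_distr_big false) /=.
rewrite (reindex_onto (fun f : {ffun T -> bool} => [set x | f x])
                      (fun S => [ffun x => x \in S])) /=; last first.
  by move=> S _; apply/setP => x; rewrite !inE ffunE.
apply: eq_big => [f|f _]; last by apply: eq_bigr => e _; rewrite inE.
rewrite powersetE; apply/andP/pfamilyP => [[/subsetP sfA /eqP <-]|[/subsetP sfA _]].
  split=> //; apply/subsetP => x; rewrite !inE ffunE inE => fx.
  by apply: sfA; rewrite inE; case: (f x) fx.
split; first by apply/subsetP => x; rewrite inE => fx; apply: sfA; rewrite !inE fx.
by apply/eqP/ffunP => x; rewrite ffunE inE.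
Qed.

Lemma prod_natr_bool (R : pzSemiRingType) (T : finType) (A : {pred T}) (q : pred T) :
  \prod_(i in A) ((q i)%:R : R) = [forall i in A, q i]%:R.
Proof.
rewrite -big_andE; apply/esym/(big_morph (fun b : bool => b%:R : R)) => // x y.
by rewrite -natrM mulnb.
Qed.

Lemma expr_cardsU (F : fieldType) (T : finType) (x : F) (A B : {set T}) :
  x != 0 -> x ^+ #|A :|: B| = x ^+ #|A| * x ^+ #|B| * x^-1 ^+ #|A :&: B|.
Proof.
move=> x0; rewrite -!exprD -cardsUI exprD exprVn mulfK //.
exact: expf_neq0.
Qed.

Lemma setU_eq_edgewise n (G0 E G : {set {set 'I_n}}) :
    G0 \subset pairs n -> E \subset pairs n -> G \subset pairs n ->
  (G0 :|: E == G) = [forall e in pairs n, (e \in G0) || (e \in E) == (e \in G)].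
Proof.
move=> /subsetP sG0 /subsetP sE /subsetP sG.
apply/eqP/forall_inP => [<- e _ | eqG]; first by rewrite inE.
apply/setP => e; rewrite inE; have [/eqG/eqP //|not_pair] := boolP (e \in pairs n).
by rewrite (contraNF (sG0 e)) ?(contraNF (sE e)) ?(contraNF (sG e)).
Qed.

Section ErdosRenyi.

Variables (R : realFieldType) (n : nat) (p : R).
Implicit Types (E G : {set {set 'I_n}}) (c : {set 'I_n} -> bool -> R).

Lemma P0_gt0 G : 0 < p -> p < 1 -> 0 < P0 p G.
Proof.
by move=> p0 p1; apply: prodr_gt0 => e _; case: ifP; rewrite ?subr_gt0.
Qed.

Lemma sum_P0_edgewise c :
  \sum_(G in graphs n) P0 p G * \prod_(e in pairs n) c e (e \in G)
  = \prod_(e in pairs n) (p * c e true + (1 - p) * c e false).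
Proof.
rewrite -sum_powerset_prod; apply: eq_bigr => G _.
by rewrite -big_split; apply: eq_bigr => e _; case: (e \in G).
Qed.

Lemma natr_subset_edgewise E G : E \subset pairs n ->
  ((E \subset G)%:R : R) = \prod_(e in pairs n) (if e \in E then (e \in G)%:R else 1).
Proof.
move=> /subsetP sE.
rewrite (eq_bigr (fun e => ((e \in E) ==> (e \in G))%:R)) => [|e _]; last first.
  by case: (e \in E).
rewrite prod_natr_bool; congr (nat_of_bool _)%:R.
apply/subsetP/forall_inP => [sEG e _ | sEG e eE]; first exact/implyP/sEG.
exact: implyP (sEG e (sE e eE)) eE.
Qed.

Lemma expr_card_edgewise E : E \subset pairs n ->
  p ^+ #|E| = \prod_(e in pairs n) (if e \in E then p else 1).
Proof.
move=> sE; rewrite -big_mkcondr -prodr_const; apply: eq_bigl => e.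
by rewrite andb_idl // => /(subsetP sE).
Qed.

Lemma sum_P0_subset E : E \subset pairs n ->
  \sum_(G in graphs n) P0 p G * (E \subset G)%:R = p ^+ #|E|.
Proof.
move=> sE; under eq_bigr => G _ do rewrite (natr_subset_edgewise G sE).
rewrite (sum_P0_edgewise (fun e b => if e \in E then b%:R else 1)).
rewrite (expr_card_edgewise sE); apply: eq_bigr => e _.
by case: (e \in E) => /=; ring.
Qed.

Lemma sum_P0_setU E G : E \subset pairs n -> G \subset pairs n ->
  (\sum_(G0 in graphs n) P0 p G0 * (G0 :|: E == G)%:R) * p ^+ #|E|
  = (E \subset G)%:R * P0 p G.
Proof.
move=> sE sG.
under eq_bigr => G0 /[!powersetE] sG0.
  rewrite (setU_eq_edgewise sG0 sE sG) -prod_natr_bool.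
over.
rewrite (sum_P0_edgewise (fun e b => ((b || (e \in E)) == (e \in G))%:R)).
rewrite (expr_card_edgewise sE) (natr_subset_edgewise G sE) -!big_split /=.
by apply: eq_bigr => e _; case: (e \in E); case: (e \in G) => /=; ring.
Qed.

Lemma sum_P0_subset2 E1 E2 : E1 \subset pairs n -> E2 \subset pairs n ->
  \sum_(G in graphs n) P0 p G * ((E1 \subset G)%:R * (E2 \subset G)%:R)
  = p ^+ #|E1 :|: E2|.
Proof.
move=> sE1 sE2; rewrite -sum_P0_subset ?subUset ?sE1 //.
by apply: eq_bigr => G _; rewrite -natrM mulnb subUset.
Qed.

End ErdosRenyi.

Section Paths.

Variable n : nat.

Lemma card_succ_pairs K :
  #|[set ij : 'I_K.+1 * 'I_K.+1 | nat_of_ord ij.2 == (nat_of_ord ij.1).+1]| = K.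
Proof.
pose g (i : 'I_K) := (widen_ord (leqnSn K) i, lift ord0 i).
have g_inj : injective g by move=> i j [/val_inj].
suff -> : [set ij : 'I_K.+1 * 'I_K.+1 | nat_of_ord ij.2 == (nat_of_ord ij.1).+1]
    = g @: setT by rewrite card_imset // cardsT card_ord.
apply/setP=> -[a b]; rewrite inE /=; apply/eqP/imsetP => [ab | [i _ [-> ->]]] //.
have aK : (a < K)%N by rewrite -ltnS -ab.
by exists (Ordinal aK); rewrite ?inE //; congr pair; apply: val_inj.
Qed.

Lemma pedges_sub_pairs K (f : 'I_K -> 'I_n) : injective f -> pedges f \subset pairs n.
Proof.
move=> f_inj; apply/subsetP => _ /imsetP[[a b] /[!inE] /= /eqP ba ->].
by rewrite cards2 (inj_eq f_inj) -val_eqE /= ba neq_ltn ltnSn.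
Qed.

Lemma card_pedges K (f : 'I_K.+1 -> 'I_n) : injective f -> #|pedges f| = K.
Proof.
move=> f_inj; rewrite card_in_imset ?card_succ_pairs //.
move=> [a1 b1] [a2 b2] /[!inE] /= /eqP b1E /eqP b2E /setP eq12.
have := eq12 (f a1); have := eq12 (f b1).
rewrite !inE !eqxx orbT !(inj_eq f_inj) -!val_eqE /= => /esym h1 /esym h2.
have a12 : a1 = a2 :> nat by lia.
by congr pair; apply: val_inj => /=; lia.
Qed.

Lemma pedges_map K (sigma : 'I_n -> 'I_n) (g h : 'I_K -> 'I_n) :
  h =1 sigma \o g -> pedges h = (fun e : {set 'I_n} => sigma @: e) @: pedges g.
Proof.
move=> hE; rewrite -imset_comp; apply: eq_imset => ij /=.
by rewrite !hE imsetU1 imset_set1.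
Qed.

Lemma path0E K (Kn : (K <= n)%N) : path0 n K = pedges (widen_ord Kn).
Proof.
pose w2 (ij : 'I_K * 'I_K) := (widen_ord Kn ij.1, widen_ord Kn ij.2).
rewrite /path0 /pedges (_ : [set ab : 'I_n * 'I_n | _]
  = w2 @: [set ij : 'I_K * 'I_K | nat_of_ord ij.2 == (nat_of_ord ij.1).+1]).
  by rewrite -imset_comp.
apply/setP => -[a b]; rewrite inE /=; apply/andP/imsetP => [[/eqP ba bK] | ].
  have aK : (a < K)%N by rewrite ltnW // -ba.
  exists (Ordinal aK, Ordinal bK); first by rewrite inE /= ba.
  by congr pair; apply: val_inj.
by move=> [[i j] /[!inE] /= /eqP ji [-> ->]] /=; rewrite ji -ji.
Qed.

Lemma extend_injection K (Kn : (K <= n)%N) (f : 'I_K -> 'I_n) :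
  injective f ->
  exists2 sigma : 'I_n -> 'I_n, injective sigma & f =1 sigma \o widen_ord Kn.
Proof.
move=> f_inj; have [x0 _ | no_node] := pickP (@predT 'I_n); last first.
  by exists id => // i; have := no_node (f i).
pose s := map f (enum 'I_K) ++ [seq x <- enum 'I_n | x \notin codom f].
have s_uniq : uniq s.
  rewrite cat_uniq map_inj_uniq // enum_uniq filter_uniq ?enum_uniq // andbT /=.
  by apply/hasPn => x; rewrite mem_filter -codomE => /andP[].
have size_s : size s = n.
  move/card_uniqP: s_uniq => <-; rewrite -[RHS]card_ord; apply: eq_card => x.
  by rewrite mem_cat -codomE mem_filter mem_enum andbT orbN.
exists (fun x => nth x0 s x).
  by move=> x y /eqP; rewrite nth_uniq ?size_s // => /eqP /val_inj.
move=> i /=; rewrite nth_cat size_map size_enum_ord ltn_ord.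
by rewrite (nth_map i) ?size_enum_ord // nth_ord_enum.
Qed.

Lemma sum_pedges_overlap (R : nmodType) K (Kn : (K <= n)%N) (F : nat -> R)
    (f : {ffun 'I_K -> 'I_n}) : f \in injs n K ->
  \sum_(g in injs n K) F #|pedges f :&: pedges g|
  = \sum_(g in injs n K) F #|path0 n K :&: pedges g|.
Proof.
rewrite inE => /injectiveP f_inj.
have [sigma sigma_inj fE] := extend_injection Kn f_inj.
have [sigma' sigmaK sigmaK'] := injF_bij sigma_inj.
pose sigma_f (g : {ffun 'I_K -> 'I_n}) : {ffun 'I_K -> 'I_n} := [ffun i => sigma (g i)].
have sigma_f_bij : {on injs n K, bijective sigma_f}.
  exists (fun g : {ffun 'I_K -> 'I_n} => [ffun i => sigma' (g i)]) => g _; apply/ffunP => i.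
    by rewrite !ffunE sigmaK.
  by rewrite !ffunE sigmaK'.
have sigma_f_injs g : (sigma_f g \in injs n K) = (g \in injs n K).
  rewrite !inE; apply/injectiveP/injectiveP => g_inj i j.
    by move=> gij; apply: g_inj; rewrite !ffunE gij.
  by rewrite !ffunE => /sigma_inj /g_inj.
rewrite (reindex sigma_f sigma_f_bij); apply: eq_big => [g | g _].
  exact: sigma_f_injs.
have sigma_set_inj : injective (fun e : {set 'I_n} => sigma @: e).
  exact: imset_inj.
rewrite (pedges_map (g := g) (ffunE _)) (pedges_map fE) -path0E.
by rewrite -imsetI ?card_imset // => A B _ _; apply: sigma_set_inj.
Qed.

End Paths.

Lemma natr_nKpaths (R : pzSemiRingType) n K (G : {set {set 'I_n}}) :
  (nKpaths K G)%:R = \sum_(f in injs n K) ((pedges f \subset G)%:R : R).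
Proof.
rewrite -natr_sum /nKpaths -sum1_card; congr _%:R.
rewrite big_mkcond [RHS]big_mkcond; apply: eq_bigr => f _.
by rewrite !inE; case: injectiveb.
Qed.

Section LikelihoodRatio.

Variables (R : realFieldType) (n K : nat) (p : R).
Hypotheses (p_gt0 : 0 < p) (p_lt1 : p < 1).

Lemma LR_sum_paths G : G \in graphs n ->
  LR K.+1 p G = (#|injs n K.+1|%:R)^-1 * p^-1 ^+ K
                * \sum_(f in injs n K.+1) (pedges f \subset G)%:R.
Proof.
rewrite powersetE => sG.
have P0G : P0 p G != 0 by rewrite gt_eqF ?P0_gt0.
have pK : p ^+ K != 0 by rewrite expf_neq0 ?gt_eqF.
have union_weight f : f \in injs n K.+1 ->
    \sum_(G0 in graphs n) P0 p G0 * (G0 :|: pedges f == G)%:R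
    = (pedges f \subset G)%:R * P0 p G / p ^+ K.
  rewrite inE => /injectiveP f_inj.
  by rewrite -(sum_P0_setU p (pedges_sub_pairs f_inj) sG) card_pedges // mulfK.
apply: (mulIf P0G); rewrite divfK // /P1 (eq_bigr _ union_weight) -!mulr_suml exprVn.
ring.
Qed.

Lemma E0_LR2 (Kn : (K.+1 <= n)%N) :
  E0 p (fun G : {set {set 'I_n}} => LR K.+1 p G ^+ 2)
  = (#|injs n K.+1|%:R)^-1
    * \sum_(g in injs n K.+1) p^-1 ^+ #|path0 n K.+1 :&: pedges g|.
Proof.
set N := #|injs n K.+1|%:R.
have p0 : p != 0 by rewrite gt_eqF.
have injsP f : f \in injs n K.+1 -> injective f by rewrite inE => /injectiveP.
have second_moment : \sum_(G in graphs n)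
      P0 p G * (\sum_(f in injs n K.+1) ((pedges f \subset G)%:R : R)) ^+ 2
    = \sum_(f in injs n K.+1) \sum_(g in injs n K.+1)
        p ^+ K * p ^+ K * p^-1 ^+ #|pedges f :&: pedges g|.
  under eq_bigr => G _ do rewrite expr2 big_distrlr /= mulr_sumr.
  rewrite exchange_big; apply: eq_bigr => f f_injs.
  under eq_bigr => G _ do rewrite mulr_sumr.
  rewrite exchange_big; apply: eq_bigr => g g_injs.
  have [f_inj g_inj] := (injsP f f_injs, injsP g g_injs).
  by rewrite sum_P0_subset2 ?pedges_sub_pairs // expr_cardsU // !card_pedges.
rewrite /E0; under eq_bigr => G G_graph do rewrite LR_sum_paths // exprMn mulrCA.
rewrite -mulr_sumr second_moment.
under eq_bigr => f f_injs.
  rewrite -mulr_sumr (sum_pedges_overlap Kn (fun k => p^-1 ^+ k) f_injs).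
over.
rewrite -mulr_sumr sumr_const -mulr_natr.
have N0 : N != 0.
  by rewrite pnatr_eq0 /injs card_inj_ffuns !card_ord -lt0n ffact_gt0.
by rewrite exprVn; field; rewrite N0 expf_neq0.
Qed.

End LikelihoodRatio.

Theorem lemma2 (R : realFieldType) (n K : nat) (lam : R)
  (Hlam0 : 0 < lam) (Hlamn : lam < n%:R) (HK1 : (1 <= K)%N) (HKn : (K <= n)%N) :
  let p := lam / n%:R in
  (forall G : {set {set 'I_n}}, G \in graphs n ->
     LR K p G = ((n ^_ K)%:R)^-1 * (nKpaths K G)%:R * p ^- (K - 1)) /\
  E0 p (fun G : {set {set 'I_n}} => LR K p G ^+ 2)
    = Eunif (fun f : {ffun 'I_K -> 'I_n} => (n%:R / lam) ^+ Scommon f).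
Proof.
move=> p; case: K HK1 HKn => [//|K] _ Kn.
have n_gt0 : 0 < n%:R :> R by rewrite ltr0n (leq_trans _ Kn).
have p_gt0 : 0 < p by rewrite divr_gt0.
have p_lt1 : p < 1 by rewrite ltr_pdivrMr // mul1r.
split=> [G G_graph|].
  rewrite LR_sum_paths // -natr_nKpaths card_inj_ffuns !card_ord subn1 exprVn.
  by rewrite mulrAC.
by rewrite E0_LR2 // /Eunif invf_div.
Qed.
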